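(* Let $q\ge2$ be even and $d\ge q+1$. Let $f$ be a density on $\mathbb{R}^d$ with mode $\boldsymbol\theta$, sufficiently smooth, whose $(q+1)$-st order term of the Taylor expansion around $\boldsymbol\theta$ is of the form $\prod_{i=1}^{q+1}\mathbf a_i^\top(\mathbf x-\boldsymbol\theta)$ with $\mathbf a_1,\ldots,\mathbf a_{q+1}\in\mathbb{R}^d$ linearly independent. Then there is a choice of $\mathrm Q$ for which the asymptotic bias of the kernel mode estimator with elliptic kernel is equal to zero, i.e. $\nabla(\nabla^\top\mathrm Q\nabla)^{q/2}f(\boldsymbol\theta)=\mathbf 0$.
   Context: Setting: $\mathrm A=\{Hf(\boldsymbol\theta)\}^{-1}$ is assumed to exist. For a radial $q$-th order kernel $K(\mathbf x)=G(\|\mathbf x\|)$ and a $d\times d$ matrix $\mathrm P$ with $|\det\mathrm P|=1$, the elliptic kernel is $K_{\mathrm P}(\mathbf x)=K(\mathrm P\mathbf x)$, and $\mathrm Q=\mathrm P^{-1}\mathrm P^{-\top}$ (a symmetric positive definite matrix; choosing $\mathrm Q$ is equivalent to choosing $\mathrm P$). The asymptotic bias of the kernel mode estimator with bandwidth $h_n$ and kernel $K_{\mathrm P}$ is $-\frac{\pi^{d/2}h_n^q}{2^{q-1}\Gamma(\frac{d+q}{2})\Gamma(\frac q2+1)}B_{d,q}(G)\,\mathrm A\,\nabla(\nabla^\top\mathrm Q\nabla)^{q/2}f(\boldsymbol\theta)$, where $B_{d,q}(G)=\int_0^\infty x^{d-1+q}G(x)dx\neq0$; hence it vanishes iff the vector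 $\nabla(\nabla^\top\mathrm Q\nabla)^{q/2}f(\boldsymbol\theta)$ (which depends only on the $(q+1)$-st order Taylor term of $f$ at $\boldsymbol\theta$) is zero. *)

From HB Require Import structures.
From mathcomp Require Import all_boot all_order all_algebra.
From mathcomp Require Import all_classical all_reals all_analysis.
Set Implicit Arguments. Unset Strict Implicit. Unset Printing Implicit Defensive.
Import Order.TTheory GRing.Theory Num.Theory.
Import numFieldNormedType.Exports.
Local Open Scope ring_scope.

Section Defs.
Variables (R : realType) (d : nat).

Definition stdbasis (i : 'I_d) : 'rV[R]_d := delta_mx 0 i.

Definition iterDir (f : 'rV[R]_d -> R) (vs : seq 'rV[R]_d) : 'rV[R]_d -> R :=
  foldr (fun v g => 'D_v g) f vs.

Definition smooth_upto (f : 'rV[R]_d -> R) (k : nat) : Prop :=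
  (forall vs : seq 'rV[R]_d, (size vs < k)%N -> forall x, differentiable (iterDir f vs) x) /\
  (forall vs : seq 'rV[R]_d, (size vs <= k)%N -> continuous (iterDir f vs)).

Definition ellipticLap (Q : 'M[R]_d) (g : 'rV[R]_d -> R) : 'rV[R]_d -> R :=
  fun x => \sum_(i < d) \sum_(j < d) Q i j * 'D_(stdbasis i) ('D_(stdbasis j) g) x.

Definition QofP (P : 'M[R]_d) : 'M[R]_d := invmx P *m (invmx P)^T.

End Defs.

(* Let T(v_1, ..., v_(q+1)) = D_(v_1) ... D_(v_(q+1)) f(theta).  By Schwarz's
   theorem T is a symmetric multilinear form, and T(y, ..., y) = (q+1)! prod_i a_i.y.  Since
   the a_i are linearly independent, some unimodular matrix M has every column c_l orthogonal
   to all the a_i but one; for P = M^-1 we get Q = M M^T and nabla^T Q nabla = sum_l D_(c_l)^2.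
   Along a line y + t c_l the product prod_i a_i.(y + t c_l) is affine in t, so its
   t^2-coefficient, a multiple of T(c_l, c_l, y, ..., y), vanishes, and by polarization
   T(c_l, c_l, ...) = 0.  Every term of D_(e_k) (nabla^T Q nabla)^(q/2) f(theta) contains such
   a repeated direction c_l, hence vanishes. *)

From HB Require Import structures.
From mathcomp Require Import all_boot all_order all_algebra.
From mathcomp Require Import all_classical all_reals all_analysis.
From mathcomp Require Import ring zify.
Set Implicit Arguments. Unset Strict Implicit. Unset Printing Implicit Defensive.
Import Order.TTheory GRing.Theory Num.Theory.
Import numFieldNormedType.Exports.
Local Open Scope ring_scope.

Lemma eq_poly_horner (R : numDomainType) (p q : {poly R}) :
  (forall t, p.[t] = q.[t]) -> p = q.
Proof.
move=> pq; apply/eqP; rewrite -subr_eq0; apply: contraT => nz.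
pose rs : seq R := [seq i%:R | i <- iota 0 (size (p - q))].
suff : (size rs < size (p - q)%R)%N by rewrite size_map size_iota ltnn.
apply: max_poly_roots nz _ _.
  by apply/allP => _ /mapP[i _ ->]; rewrite rootE hornerD hornerN pq subrr.
by rewrite map_inj_uniq ?iota_uniq // => i j /eqP; rewrite eqr_nat => /eqP.
Qed.

Section SymmetricMultilinear.
Variables (R : numFieldType) (V : lmodType R).

(* A symmetric multilinear form of arity N, as a function on lists of length N; by symmetry,
   linearity in the first argument suffices. *)
Record symmetric_multilinear (N : nat) (S : seq V -> R) : Prop :=
  SymmetricMultilinear {
    symmetric_multilinear_perm :
      forall s1 s2, size s1 = N -> perm_eq s1 s2 -> S s1 = S s2;
    symmetric_multilinear_head : forall a u v s, (size s).+1 = N ->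
      S ((a *: u + v) :: s) = a * S (u :: s) + S (v :: s) }.

Lemma symmetric_multilinear_cons N S y :
  symmetric_multilinear N.+1 S -> symmetric_multilinear N (fun s => S (y :: s)).
Proof.
case=> Sperm Slin; split=> [s1 s2 hs p | a u v s hs].
  by apply: Sperm; rewrite /= ?hs // perm_cons.
have swap w : S (y :: w :: s) = S (w :: y :: s).
  by apply: Sperm; rewrite /= ?hs // (perm_catCA [:: y] [:: w] s).
by rewrite !swap Slin //= hs.
Qed.

Section Expansion.
Variables (N : nat) (S : seq V -> R).
Hypothesis S_sml : symmetric_multilinear N S.

Lemma symmetric_multilinear_nseqD (y z : V) (t : R) :
  S (nseq N (y + t *: z)) =
  \sum_(k < N.+1) 'C(N, k)%:R * t ^+ k * S (nseq k z ++ nseq (N - k) y).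
Proof.
elim: N S S_sml => [|M IH] T T_sml; first by rewrite big_ord1 expr0 !mul1r.
have [Tperm Tlin] := T_sml.
pose a k := T (nseq k z ++ nseq (M.+1 - k) y).
have Ty (k : 'I_M.+1) : T (y :: nseq k z ++ nseq (M - k) y) = a k.
  have kM : (k <= M)%N := ltn_ord k.
  apply: Tperm; first by rewrite /= size_cat !size_nseq subnKC.
  by rewrite /a subSn // (perm_catCA [:: y]).
rewrite /= {1}addrC Tlin ?size_nseq //.
rewrite (IH (fun s => T (z :: s))) ?(IH (fun s => T (y :: s)));
  try exact: symmetric_multilinear_cons.
pose F k := t ^+ k * a k.
rewrite mulr_sumr (eq_bigr (fun k : 'I_M.+1 => 'C(M, k)%:R * F k.+1)); last first.
  by move=> k _; rewrite /F /a exprS subSS /=; ring.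
rewrite [X in _ + X = _](eq_bigr (fun k : 'I_M.+1 => 'C(M, k)%:R * F k)); last first.
  by move=> k _; rewrite Ty /F mulrA.
have E : \sum_(k < M.+2) 'C(M, k)%:R * F k = \sum_(k < M.+1) 'C(M, k)%:R * F k.
  by rewrite big_ord_recr /= bin_small // mul0r addr0.
rewrite (eq_bigr (fun k : 'I_M.+2 => 'C(M.+1, k)%:R * F k)); last first.
  by move=> k _; rewrite mulrA.
rewrite -E [X in _ + X]big_ord_recl [RHS]big_ord_recl !bin0 addrCA -big_split.
congr (_ + _); apply: eq_bigr => k _.
by rewrite binS natrD mulrDl addrC.
Qed.

Lemma symmetric_multilinear_coef (y z : V) (p : {poly R}) :
    (forall t, S (nseq N (y + t *: z)) = p.[t]) ->
  forall k, (k <= N)%N -> p`_k = 'C(N, k)%:R * S (nseq k z ++ nseq (N - k) y).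
Proof.
move=> Sp k kN.
suff -> : p = \poly_(k < N.+1) ('C(N, k)%:R * S (nseq k z ++ nseq (N - k) y)).
  by rewrite coef_poly ltnS kN.
apply: eq_poly_horner => t; rewrite -Sp horner_poly symmetric_multilinear_nseqD.
by apply: eq_bigr => i _; rewrite mulrAC.
Qed.

End Expansion.

Lemma symmetric_multilinear_eq0 N S : symmetric_multilinear N S ->
  (forall y, S (nseq N y) = 0) -> forall s, size s = N -> S s = 0.
Proof.
elim: N S => [|N IH] S S_sml S0 [|z s] //=; first by move=> _; exact: (S0 0).
move=> [hs].
apply: (IH _ (symmetric_multilinear_cons z S_sml)) => // y.
have Sp t : S (nseq N.+1 (y + t *: z)) = 0.[t] by rewrite S0 horner0.
have := symmetric_multilinear_coef S_sml Sp (isT : (1 <= N.+1)%N).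
rewrite coef0 bin1 subSS subn0 => /esym /eqP.
by rewrite mulf_eq0 pnatr_eq0 => /eqP.
Qed.

Lemma symmetric_multilinear_affine_line N S (c : V) :
    symmetric_multilinear N.+2 S ->
    (forall y, exists a b, forall t, S (nseq N.+2 (y + t *: c)) = a + b * t) ->
  forall s, size s = N -> S (c :: c :: s) = 0.
Proof.
move=> S_sml Saff.
have Scc_sml := symmetric_multilinear_cons c (symmetric_multilinear_cons c S_sml).
apply: symmetric_multilinear_eq0 Scc_sml _ => y.
have [a [b Sab]] := Saff y.
have Sp t : S (nseq N.+2 (y + t *: c)) = (a%:P + b%:P * 'X).[t].
  by rewrite Sab hornerD hornerC hornerCM hornerX.
have := symmetric_multilinear_coef S_sml Sp (isT : (2 <= N.+2)%N).
rewrite coefD coefC coefCM coefX /= mulr0 add0r subSS subSS subn0 => /esym /eqP.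
by rewrite mulf_eq0 pnatr_eq0 -leqn0 leqNgt bin_gt0 /= => /eqP.
Qed.

End SymmetricMultilinear.

Lemma row_free_pid_mx (F : fieldType) m n (A : 'M[F]_(m, n)) : row_free A ->
  exists2 M : 'M[F]_n, M \in unitmx & A *m M = pid_mx m.
Proof.
move=> rfA; have rkA : \rank A = m by apply/eqP.
have mn : (m <= n)%N by rewrite -rkA rank_leq_col.
pose B := pinvmx A; pose K := cokermx A; pose U := row_ebase A.
have AB : A *m B = 1%:M := mulmxVp rfA.
have AK : A *m K = 0 := mulmx_coker A.
have UK : U *m K = copid_mx m.
  by rewrite /K /cokermx mulmxA mulmxV ?row_ebase_unit // mul1mx rkA.
pose P := 1%:M - B *m A.
have PB : P *m B = 0 by rewrite mulmxBl mul1mx -mulmxA AB mulmx1 subrr.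
have PK : P *m K = K by rewrite mulmxBl mul1mx -mulmxA AK mulmx0 subr0.
(* The right inverse [B] provides the first m columns, the kernel basis [K] the others. *)
exists (B *m pid_mx m + K); last by rewrite mulmxDr mulmxA AB mul1mx AK addr0.
pose N := pid_mx m *m A + copid_mx m *m U *m P.
suff /mulmx1_unit[] : N *m (B *m pid_mx m + K) = 1%:M by [].
rewrite /N; clearbody B K U P.
rewrite mulmxDl !mulmxDr -!mulmxA (mulmxA A B) AB mul1mx AK mulmx0 addr0.
rewrite (mulmxA P B) PB mul0mx !mulmx0 add0r PK UK copid_mx_id //.
by rewrite pid_mx_id // /copid_mx addrC subrK.
Qed.

Lemma row_free_sparse_unimodular (F : fieldType) m n (A : 'M[F]_(m.+1, n)) :
    row_free A ->
  exists M : 'M[F]_n, \det M = 1 /\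
    forall l, exists i0, forall i, i != i0 -> (A *m M) i l = 0.
Proof.
move=> rfA; have [M0 M0u AM0] := row_free_pid_mx rfA.
have n0 : (0 < n)%N.
  by rewrite (leq_trans _ (rank_leq_col A)) // (eqP (rfA : \rank A == m.+1)).
pose l0 := Ordinal n0.
pose b : 'rV_n := \row_l (if l == l0 then (\det M0)^-1 else 1).
exists (M0 *m diag_mx b); split.
  rewrite det_mulmx det_diag (bigD1 l0) //= big1 => [|l /negPf nl]; last first.
    by rewrite mxE nl.
  by rewrite mxE eqxx mulr1 mulfV // -unitfE -unitmxE.
move=> l; exists (inord l) => i il.
rewrite mulmxA AM0 mul_mx_diag !mxE; case: eqP => [il'|_]; last by rewrite mul0r.
by case/eqP: il; apply: val_inj; rewrite /= inordK // -il'.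
Qed.

Lemma prod_linear_forms_affine (R : comPzRingType) k d (A : 'M[R]_(k, d))
    (y c : 'rV[R]_d) (i0 : 'I_k) :
    (forall i, i != i0 -> \sum_(j < d) A i j * c 0 j = 0) ->
  exists a b, forall t,
    \prod_(i < k) \sum_(j < d) A i j * (y + t *: c) 0 j = a + b * t.
Proof.
move=> c0.
have lin i t : \sum_(j < d) A i j * (y + t *: c) 0 j =
    \sum_(j < d) A i j * y 0 j + t * \sum_(j < d) A i j * c 0 j.
  by rewrite mulr_sumr -big_split; apply: eq_bigr => j _; rewrite !mxE mulrDr mulrCA.
pose P := \prod_(i < k | i != i0) \sum_(j < d) A i j * y 0 j.
exists ((\sum_(j < d) A i0 j * y 0 j) * P), ((\sum_(j < d) A i0 j * c 0 j) * P).
move=> t; rewrite (bigD1 i0) //= lin.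
under eq_bigr => i ni do rewrite lin c0 // mulr0 addr0.
by rewrite -/P; ring.
Qed.

Section Schwarz.
Variables (R : realType) (V : normedModType R).

Lemma is_derive_line (h : V -> R) (p w : V) (t : R) :
  derivable h (p + t *: w) w ->
  is_derive t 1 (fun r : R => h (p + r *: w)) ('D_w h (p + t *: w)).
Proof.
move=> dh.
have E : (fun r : R => r^-1 *: (h (p + (r *: 1 + t) *: w) - h (p + t *: w))) =
         (fun r : R => r^-1 *: (h (r *: w + (p + t *: w)) - h (p + t *: w))).
  apply/funext => r; congr (_ *: (h _ - _)).
  by rewrite -[r *: 1]/(r * 1) mulr1 scalerDl addrCA.
by apply: DeriveDef; rewrite /derivable /derive /= E.
Qed.

Lemma mvt_origin (phi dphi : R -> R) (s : R) : 0 < s ->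
    (forall r : R, is_derive r 1 phi (dphi r)) ->
  exists2 c, 0 < c < s & phi s - phi 0 = s * dphi c.
Proof.
move=> s0 dphi_phi.
have [|c] := @MVT R phi dphi 0 s s0 (fun r _ => dphi_phi r).
  by apply: derivable_within_continuous => r _; apply: ex_derive.
by rewrite in_itv subr0 mulrC; exists c.
Qed.

Lemma second_difference_mvt (g : V -> R) (u v x : V) (s : R) : 0 < s ->
    (forall y, derivable g y u) -> (forall y, derivable ('D_u g) y v) ->
  exists a b, [/\ 0 < a < s, 0 < b < s &
    g (x + s *: u + s *: v) - g (x + s *: u) - g (x + s *: v) + g x =
    s ^+ 2 * 'D_v ('D_u g) (x + a *: u + b *: v)].
Proof.
move=> s0 dg dDg.
have [a aI Ea] := mvt_origin s0 (fun r =>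
  is_deriveB (is_derive_line (p := x + s *: v) (dg _))
             (is_derive_line (p := x) (dg _))).
have [b bI Eb] := mvt_origin s0 (fun r =>
  is_derive_line (p := x + a *: u) (dDg (x + a *: u + r *: v))).
exists a, b; split => //.
move: Ea Eb => /=; rewrite !scale0r !addr0 !(addrAC x (s *: v)) => Ea Eb.
by rewrite expr2 -mulrA -Eb -Ea !fctE /= !scale0r !addr0 (addrAC x (s *: v)); ring.
Qed.

Lemma ball_small_shift (x u v : V) (r : R) : 0 < r ->
  exists2 s, 0 < s & forall a b, 0 < a < s -> 0 < b < s ->
    ball x r (x + a *: u + b *: v).
Proof.
move=> r0; pose K := `|u| + `|v| + 1.
have K0 : 0 < K by rewrite ltr_wpDl // addr_ge0.
exists (r / K) => [|a b /andP[a0 aS] /andP[b0 bS]]; first by rewrite divr_gt0.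
rewrite -ball_normE /= -addrA opprD addrA subrr add0r normrN.
rewrite (le_lt_trans (ler_normD _ _)) // !normrZ !gtr0_norm //.
rewrite -(divfK (lt0r_neq0 K0) r) (@le_lt_trans _ _ (r / K * (`|u| + `|v|))) //.
  by rewrite mulrDr lerD // ler_wpM2r // ltW.
by rewrite ltr_pM2l ?divr_gt0 // ltrDl.
Qed.

Lemma derive_comm (g : V -> R) (u v x : V) :
    (forall y, derivable g y u) -> (forall y, derivable g y v) ->
    (forall y, derivable ('D_u g) y v) -> (forall y, derivable ('D_v g) y u) ->
    {for x, continuous ('D_v ('D_u g))} -> {for x, continuous ('D_u ('D_v g))} ->
  'D_v ('D_u g) x = 'D_u ('D_v g) x.
Proof.
move=> dgu dgv dguv dgvu cuv cvu.
apply/eqP; rewrite -subr_eq0 -normr_le0; apply/ler_addgt0Pr => e e0.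
have e2 : 0 < e / 2 by rewrite divr_gt0.
have [r r0 near_x] := proj1 (nbhs_ballP _ _)
  (filterI (cvgr_dist_lt _ _ cuv _ e2) (cvgr_dist_lt _ _ cvu _ e2)).
have [s s0 close] := ball_small_shift x u v r0.
have [a [b [aI bI E1]]] := second_difference_mvt x s0 dgu dguv.
have [b' [a' [bI' aI' E2]]] := second_difference_mvt x s0 dgv dgvu.
(* Both mixed derivatives give the same second difference quotient at points of [ball x r]. *)
have E : 'D_v ('D_u g) (x + a *: u + b *: v) = 'D_u ('D_v g) (x + a' *: u + b' *: v).
  apply: (mulfI (expf_neq0 2 (lt0r_neq0 s0))).
  by rewrite -E1 (addrAC x (a' *: u)) -E2 (addrAC x (s *: v)); ring.
have [L1 _] := near_x _ (close _ _ aI bI).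
have [_ L2] := near_x _ (close _ _ aI' bI').
apply: ltW; rewrite add0r (splitr e).
have -> : 'D_v ('D_u g) x - 'D_u ('D_v g) x =
    ('D_v ('D_u g) x - 'D_v ('D_u g) (x + a *: u + b *: v)) -
    ('D_u ('D_v g) x - 'D_u ('D_v g) (x + a' *: u + b' *: v)).
  by rewrite E opprB addrA subrK.
exact: le_lt_trans (ler_normB _ _) (ltrD L1 L2).
Qed.

End Schwarz.

Section RowDerivatives.
Variables (R : realType) (d : nat).
Local Notation V := 'rV[R]_d.

Lemma derive_rowE (h : V -> R) (x v : V) : differentiable h x ->
  'D_v h x = \sum_(j < d) v 0 j * 'D_(stdbasis R j) h x.
Proof.
move=> dh; rewrite deriveE // {1}(row_sum_delta v) linear_sum.
by apply: eq_bigr => j _; rewrite linearZ -deriveE.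
Qed.

Lemma ellipticLap_mulmx_tr (M : 'M[R]_d) (g : V -> R) (x : V) :
    (forall y, differentiable g y) ->
    (forall j, differentiable ('D_(stdbasis R j) g) x) ->
  ellipticLap (M *m M^T) g x = \sum_(l < d) 'D_(row l M^T) ('D_(row l M^T) g) x.
Proof.
move=> dg dDg.
have Dg l : 'D_(row l M^T) g = \sum_(j < d) M j l \*: 'D_(stdbasis R j) g.
  apply/funext => y; rewrite derive_rowE // fct_sumE.
  by apply: eq_bigr => j _; rewrite !mxE.
under [RHS]eq_bigr => l _.
  rewrite Dg derive_sum => [|j]; last exact/derivableZ/diff_derivable.
  under eq_bigr => j _.
    rewrite deriveZ; last exact: diff_derivable.
    rewrite derive_rowE // scaler_sumr.
    over.
  over.
rewrite /= exchange_big; under eq_bigr => j _ do rewrite exchange_big.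
rewrite /= exchange_big; apply: eq_bigr => i _; apply: eq_bigr => j _.
rewrite !mxE mulr_suml; apply: eq_bigr => l _.
by rewrite !mxE -mulrA mulrCA.
Qed.

End RowDerivatives.

Section IteratedDerivatives.
Variables (R : realType) (d n : nat) (f : 'rV[R]_d -> R).
Hypothesis f_smooth : smooth_upto f n.
Local Notation V := 'rV[R]_d.

Lemma iterDir_cons (v : V) s : iterDir f (v :: s) = 'D_v (iterDir f s).
Proof. by []. Qed.

Lemma derivable_iterDir (s : seq V) x w : (size s < n)%N ->
  derivable (iterDir f s) x w.
Proof. by move=> hs; apply/diff_derivable/f_smooth.1. Qed.

Lemma iterDir_swap (u v : V) s : ((size s).+2 <= n)%N ->
  iterDir f (u :: v :: s) = iterDir f (v :: u :: s).
Proof.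
move=> hs; apply/funext => x; have hs1 : (size s < n)%N := ltnW hs.
exact: (derive_comm (fun _ => derivable_iterDir hs1) (fun _ => derivable_iterDir hs1)
  (fun _ => derivable_iterDir (s := v :: s) hs)
  (fun _ => derivable_iterDir (s := u :: s) hs)
  (f_smooth.2 (u :: v :: s) hs x) (f_smooth.2 (v :: u :: s) hs x)).
Qed.

Lemma iterDir_insert (w : V) s1 s2 : (size s1 + size s2 < n)%N ->
  iterDir f (w :: s1 ++ s2) = iterDir f (s1 ++ w :: s2).
Proof.
elim: s1 => [//|v s1 IH] hs; rewrite !cat_cons.
rewrite iterDir_swap ?size_cat; last by move: hs => /=; lia.
by rewrite iterDir_cons [in RHS]iterDir_cons IH //; move: hs => /=; lia.
Qed.

Lemma perm_iterDir (s1 s2 : seq V) : (size s1 <= n)%N -> perm_eq s1 s2 ->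
  iterDir f s1 = iterDir f s2.
Proof.
elim: s1 s2 => [|w s1 IH] s2 hs; first by move=> /perm_size/esym/size0nil ->.
move=> p12; have w_s2 : w \in s2 by rewrite -(perm_mem p12) mem_head.
case/splitPr: s2 / w_s2 p12 => t1 t2 p12.
have p : perm_eq s1 (t1 ++ t2).
  by rewrite -(perm_cons w); apply: perm_trans p12 _; rewrite -cat1s perm_catCA.
rewrite iterDir_cons (IH _ (ltnW hs) p) -iterDir_cons iterDir_insert //.
by rewrite -size_cat -(perm_size p).
Qed.

Lemma symmetric_multilinear_iterDir x :
  symmetric_multilinear n (fun s => iterDir f s x).
Proof.
split=> [s1 s2 hs p | a u v s hs]; first by rewrite (perm_iterDir _ p) ?hs.
have dfs : differentiable (iterDir f s) x by apply: f_smooth.1; rewrite -hs.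
by rewrite /= !deriveE // linearD linearZ.
Qed.

Lemma differentiable_sum_iterDir (S : seq (seq V)) x :
    (forall s, s \in S -> (size s < n)%N) ->
  differentiable (fun y => \sum_(s <- S) iterDir f s y) x.
Proof.
move=> hS; rewrite -fct_sumE big_seq.
elim/big_ind: _ => [|F G dF dG|s /hS hs]; first exact: differentiable_cst.
  by apply: differentiableD; [exact: dF | exact: dG].
exact: f_smooth.1.
Qed.

Lemma derive_sum_iterDir (S : seq (seq V)) (w : V) :
    (forall s, s \in S -> (size s < n)%N) ->
  'D_w (fun y => \sum_(s <- S) iterDir f s y) =
  (fun y => \sum_(s <- map (cons w) S) iterDir f s y).
Proof.
move=> hS; apply/funext => x; rewrite -fct_sumE big_map; apply: derive_val.
rewrite big_seq [X in is_derive _ _ _ X]big_seq.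
elim/big_rec2: _ => [|s F dF /hS hs IH]; first exact: is_derive_cst.
by apply: is_deriveD => //; apply/derivableP/derivable_iterDir.
Qed.

Fixpoint lap_words (M : 'M[R]_d) (j : nat) : seq (seq V) :=
  if j is j'.+1 then
    [seq row l M^T :: row l M^T :: s | l <- enum 'I_d, s <- lap_words M j']
  else [:: [::]].

Lemma size_lap_words M j s : s \in lap_words M j -> size s = (2 * j)%N.
Proof.
elim: j s => [|j IH] s; first by rewrite inE => /eqP ->.
by case/allpairsP => -[l t] [_ /IH ht ->] /=; rewrite ht mulnS.
Qed.

Lemma iter_ellipticLap M j : (2 * j < n)%N ->
  iter j (ellipticLap (M *m M^T)) f =
  (fun x => \sum_(s <- lap_words M j) iterDir f s x).
Proof.
elim: j => [_|j IH hj]; first by apply/funext => x; rewrite big_seq1.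
have hS s : s \in lap_words M j -> ((size s).+2 <= n)%N.
  by move/size_lap_words ->; lia.
have hS' w s : s \in map (cons w) (lap_words M j) -> (size s < n)%N.
  by case/mapP=> t /hS ht ->.
rewrite iterS IH; last by lia.
apply/funext => x; rewrite ellipticLap_mulmx_tr; first last.
- move=> i; rewrite derive_sum_iterDir => [|s /hS]; last by lia.
  by apply: differentiable_sum_iterDir => s /hS'.
- by move=> y; apply: differentiable_sum_iterDir => s /hS; lia.
rewrite [RHS]big_allpairs_dep big_enum /=; apply: eq_bigr => l _.
rewrite derive_sum_iterDir => [|s /hS]; last by lia.
have /(congr1 (fun F => F x)) /= -> := derive_sum_iterDir (row l M^T) (hS' (row l M^T)).
by rewrite !big_map.
Qed.

End IteratedDerivatives.

Lemma iterDir_sparse_pair_eq0 (R : realType) d N (f : 'rV[R]_d -> R)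
    (theta : 'rV[R]_d) (A : 'M[R]_(N.+2, d)) (i0 : 'I_N.+2) (c : 'rV[R]_d) :
    smooth_upto f N.+2 ->
    (forall y, iterDir f (nseq N.+2 y) theta / (N.+2)`!%:R =
               \prod_(i < N.+2) \sum_(j < d) A i j * y 0 j) ->
    (forall i, i != i0 -> \sum_(j < d) A i j * c 0 j = 0) ->
  forall s, size s = N -> iterDir f (c :: c :: s) theta = 0.
Proof.
move=> f_smooth f_taylor c_sparse.
apply: (symmetric_multilinear_affine_line (symmetric_multilinear_iterDir f_smooth theta)).
move=> y; have [a [b ab]] := prod_linear_forms_affine y c_sparse.
have fact_neq0 : (N.+2)`!%:R != 0 :> R by rewrite pnatr_eq0 -lt0n fact_gt0.
exists (a * (N.+2)`!%:R), (b * (N.+2)`!%:R) => t.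
by rewrite -(divfK fact_neq0 (iterDir _ _ _)) f_taylor ab mulrDl mulrAC.
Qed.

Unset Implicit Arguments. Set Strict Implicit.

Theorem proposition2 (R : realType) (q d : nat) (f : 'rV[R]_d -> R)
    (theta : 'rV[R]_d) (A : 'M[R]_(q.+1, d)) :
  ~~ odd q -> (2 <= q)%N -> (q.+1 <= d)%N ->
  (forall x, 0 <= f x) ->
  (forall x, f x <= f theta) ->
  smooth_upto f q.+1 ->
  (forall y : 'rV[R]_d,
     iterDir f (nseq q.+1 y) theta / (q.+1)`!%:R
     = \prod_(i < q.+1) \sum_(j < d) A i j * y 0 j) ->
  row_free A ->
  exists P : 'M[R]_d, `|\det P| = 1 /\
    forall k : 'I_d,
      'D_(delta_mx 0 k : 'rV[R]_d) (iter (q %/ 2) (ellipticLap (QofP P)) f) theta = 0.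
Proof.
move=> q_even q_ge2 _ _ _ f_smooth f_taylor A_free.
have [M [detM M_sparse]] := row_free_sparse_unimodular A_free.
exists (invmx M); split; first by rewrite det_inv detM invr1 normr1.
rewrite /QofP invmxK => k.
have [j q_eq] : exists j, q = (2 * j).+2%N.
  exists (q %/ 2 - 1)%N; move: (divn_eq q 2); rewrite modn2 (negPf q_even); lia.
subst q; have -> : ((2 * j).+2 %/ 2 = j.+1)%N by lia.
have words_size s : s \in lap_words M j.+1 -> (size s < (2 * j).+3)%N.
  by move/size_lap_words ->; lia.
rewrite (iter_ellipticLap f_smooth); last by lia.
have /(congr1 (fun F => F theta)) /= -> :=
  derive_sum_iterDir f_smooth (delta_mx 0 k) words_size.
rewrite big_map; apply: big1_seq => _ /andP[_ /allpairsP[[l s] [_ s_in ->]]] /=.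
have [i0 M_sparse_l] := M_sparse l; set c := row l M^T.
rewrite -[LHS]/(iterDir f [:: delta_mx 0 k, c, c & s] theta).
rewrite (perm_iterDir f_smooth (s2 := [:: c, c, delta_mx 0 k & s])); first last.
- by rewrite (perm_catCA [:: delta_mx 0 k] [:: c; c] s).
- by rewrite /= (size_lap_words s_in).
apply: (iterDir_sparse_pair_eq0 f_smooth f_taylor (i0 := i0));
  last by rewrite /= (size_lap_words s_in).
move=> i ni; rewrite -[RHS](M_sparse_l i ni) [RHS]mxE.
by apply: eq_bigr => i' _; rewrite !mxE.
Qed.
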